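(* Consider the bipartite Bell scenario $(2,2,2)$ with Alice's measurements $A_1,A_2$ and Bob's measurements $B_1,B_2$, all with outcomes in $\{0,1\}$. A nondisturbing behavior for this scenario is logically contextual if and only if there exist indices $i,k,j,\ell\in\{1,2\}$ with $i\neq k$ and $j\neq\ell$, and $(a,b),(\alpha_1,\alpha_2)\in\{0,1\}^2$ such that $p_{ij}(a,b)>0$, $p_{kj}(\alpha_1,b)=0$, $p_{i\ell}(a,\alpha_2)=0$, $p_{k\ell}(\lnot\alpha_1,\lnot\alpha_2)=0$, where $\lnot x=1-x$.
   Context: The contexts of the scenario are $\{A_\mu,B_\nu\}$ for $\mu,\nu\in\{1,2\}$; a behavior is a family of probability distributions $p_{\mu\nu}$ on $\{0,1\}^2$, where $p_{\mu\nu}(x,y)$ is the probability that $A_\mu=x$ and $B_\nu=y$. It is nondisturbing if the marginal distribution of each measurement is the same in every context containing it. Let $\bar p_{\mu\nu}(x,y)=1$ if $p_{\mu\nu}(x,y)>0$, else $0$. The behavior is logically noncontextual (logically local) if there exists $\bar p:\{0,1\}^{\{A_1,A_2,B_1,B_2\}}\to\{0,1\}$ such that for every context $\{A_\mu,B_\nu\}$ and $(x,y)$, $\max\{\bar p(t): t(A_\mu)=x,\ t(B_\nu)=y\}=\bar p_{\mu\nu}(x,y)$; otherwise it is logically contextual. *)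

(* Bell scenario (2,2,2): Alice's measurements A_mu, Bob's B_nu,
   mu, nu : 'I_2 (index 0 = measurement 1, index 1 = measurement 2),
   outcomes in bool (false = 0, true = 1). *)
From HB Require Import structures.
From mathcomp Require Import all_boot all_order all_algebra.
Set Implicit Arguments. Unset Strict Implicit. Unset Printing Implicit Defensive.
Import Order.TTheory GRing.Theory Num.Theory.
Local Open Scope ring_scope.

(* p mu nu x y = p_{mu nu}(x,y): probability that A_mu = x and B_nu = y *)
Definition behavior (R : realFieldType) := 'I_2 -> 'I_2 -> bool -> bool -> R.

Definition is_behavior (R : realFieldType) (p : behavior R) : Prop :=
  (forall mu nu x y, 0 <= p mu nu x y) /\
  (forall mu nu, \sum_(x : bool) \sum_(y : bool) p mu nu x y = 1).

Definition nondisturbing (R : realFieldType) (p : behavior R) : Prop :=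
  (forall mu nu nu' x, \sum_(y : bool) p mu nu x y = \sum_(y : bool) p mu nu' x y) /\
  (forall nu mu mu' y, \sum_(x : bool) p mu nu x y = \sum_(x : bool) p mu' nu x y).

(* global assignments t : {A_1,A_2,B_1,B_2} -> {0,1};
   t.1 mu = t(A_mu), t.2 nu = t(B_nu) *)
Definition gassign := ({ffun 'I_2 -> bool} * {ffun 'I_2 -> bool})%type.

Definition pbar (R : realFieldType) (p : behavior R) mu nu x y : bool :=
  0 < p mu nu x y.

(* logically noncontextual: exists pb : assignments -> {0,1} such that
   max { pb t | t(A_mu) = x, t(B_nu) = y } = pbar_{mu nu}(x,y);
   with values in {0,1} (= bool) the max is the boolean disjunction. *)
Definition logically_noncontextual (R : realFieldType) (p : behavior R) : Prop :=
  exists pb : gassign -> bool,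
    forall mu nu x y,
      [exists t : gassign, [&& t.1 mu == x, t.2 nu == y & pb t]] = pbar p mu nu x y.

Definition logically_contextual (R : realFieldType) (p : behavior R) : Prop :=
  ~ logically_noncontextual p.

(* A witness of logical noncontextuality can only charge assignments all of
   whose four restrictions are possible, so one exists iff every possible event
   (A_i = a, B_j = b) extends to such a consistent assignment, i.e. iff there
   are a1, a2 with (a1, b), (a, a2), (a1, a2) possible in the contexts (k, j),
   (i, l), (k, l).  The forbidden pattern rules this out.  Conversely,
   nondisturbance makes the sets of possible a1 and of possible a2 nonempty,
   and gives each of their elements a possible partner in the (k, l) context;
   if either set is all of {0, 1} this yields a1, a2 at once, and otherwise the
   absence of the pattern at their complements makes the pair of their single
   elements possible. *)
From Stdlib Require Import Classical.
From HB Require Import structures.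
From mathcomp Require Import all_boot all_order all_algebra.
Set Implicit Arguments. Unset Strict Implicit. Unset Printing Implicit Defensive.
Import Order.TTheory GRing.Theory Num.Theory.
Local Open Scope ring_scope.

Lemma bool_full (f : pred bool) (a : bool) : f a -> f (~~ a) -> forall b, f b.
Proof. by case: a => fa fNa []. Qed.

Lemma bool_rel_completion (f g : pred bool) (h : rel bool) (a0 b0 : bool) :
  f a0 -> g b0 ->
  (forall a, f a -> exists b, h a b) -> (forall b, g b -> exists a, h a b) ->
  (forall a b, [|| f a, g b | h (~~ a) (~~ b)]) ->
  exists a b, [&& f a, g b & h a b].
Proof.
move=> fa0 gb0 row_h col_h blocked.
case fN: (f (~~ a0)).
  have [a hab0] := col_h b0 gb0.
  by exists a, b0; rewrite (bool_full fa0 fN) gb0.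
case gN: (g (~~ b0)).
  have [b ha0b] := row_h a0 fa0.
  by exists a0, b; rewrite (bool_full gb0 gN) fa0.
by exists a0, b0; have := blocked (~~ a0) (~~ b0); rewrite fN gN !negbK fa0 gb0.
Qed.

Definition extend (i : 'I_2) (a a' : bool) : {ffun 'I_2 -> bool} :=
  [ffun m => if m == i then a else a'].

Lemma extend_at (i : 'I_2) (a a' : bool) : extend i a a' i = a.
Proof. by rewrite ffunE eqxx. Qed.

Lemma extend_lift (i : 'I_2) (a a' : bool) : extend i a a' (lift i ord0) = a'.
Proof. by rewrite ffunE eq_sym (negbTE (neq_lift _ _)). Qed.

Lemma ord2_liftP (i m : 'I_2) : m = i \/ m = lift i ord0.
Proof.
by case: (unliftP i m) => [j ->|->]; [right; rewrite (ord1 j) | left].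
Qed.

Lemma exists_gt0_of_eq_psum (R : numDomainType) (I : finType) (F G : I -> R)
    (z : I) :
  (forall i, 0 <= F i) -> (forall i, 0 <= G i) ->
  \sum_i F i = \sum_i G i -> 0 < F z -> exists i, 0 < G i.
Proof.
move=> F_ge0 G_ge0 eqFG Fz.
have : \sum_i G i != 0.
  by rewrite -eqFG psumr_neq0 //; apply/hasP; exists z; rewrite ?mem_index_enum.
by rewrite psumr_neq0 // => /hasP[i _ Gi]; exists i.
Qed.

Section Extensions.

Variables (R : realFieldType) (p : behavior R).

Definition consistent (t : gassign) : bool :=
  [forall mu, forall nu, pbar p mu nu (t.1 mu) (t.2 nu)].

Definition extends_consistently (mu nu : 'I_2) (x y : bool) : bool :=
  [exists t : gassign, [&& t.1 mu == x, t.2 nu == y & consistent t]].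

Lemma logically_noncontextualP :
  logically_noncontextual p <->
  (forall mu nu x y, pbar p mu nu x y -> extends_consistently mu nu x y).
Proof.
split=> [[pb pbP] mu nu x y | ext].
  rewrite -pbP => /existsP[t /and3P[tx ty pbt]].
  apply/existsP; exists t; rewrite tx ty; apply/'forall_forallP => m n.
  by rewrite -pbP; apply/existsP; exists t; rewrite !eqxx.
exists consistent => mu nu x y; apply/idP/idP; last exact: ext.
by case/existsP=> t /and3P[/eqP <- /eqP <- /'forall_forallP].
Qed.

Lemma blocked_not_extends (i k j l : 'I_2) (a b al1 al2 : bool) :
  p k j al1 b = 0 -> p i l a al2 = 0 -> p k l (~~ al1) (~~ al2) = 0 ->
  ~~ extends_consistently i j a b.
Proof.
move=> pkj0 pil0 pkl0; apply/existsP => -[t /and3P[/eqP ti /eqP tj]].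
move=> /'forall_forallP ct.
have tk : t.1 k = ~~ al1.
  move: (ct k j); rewrite tj /pbar.
  by case: (t.1 k) al1 pkj0 {pkl0} => [] [] // ->; rewrite ltxx.
have tl : t.2 l = ~~ al2.
  move: (ct i l); rewrite ti /pbar.
  by case: (t.2 l) al2 pil0 {pkl0} => [] [] // ->; rewrite ltxx.
by have := ct k l; rewrite tk tl /pbar pkl0 ltxx.
Qed.

Hypothesis p_ge0 : forall mu nu x y, 0 <= p mu nu x y.
Hypothesis p_nd : nondisturbing p.

Lemma pbarN_eq0 mu nu x y : ~~ pbar p mu nu x y -> p mu nu x y = 0.
Proof. by rewrite /pbar lt0r p_ge0 andbT negbK => /eqP. Qed.

Lemma pbar_marginalA mu nu nu' x y :
  pbar p mu nu x y -> exists y', pbar p mu nu' x y'.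
Proof.
exact: exists_gt0_of_eq_psum (p_ge0 _ _ _) (p_ge0 _ _ _) (p_nd.1 mu nu nu' x).
Qed.

Lemma pbar_marginalB mu mu' nu x y :
  pbar p mu nu x y -> exists x', pbar p mu' nu x' y.
Proof.
exact: exists_gt0_of_eq_psum (fun x => p_ge0 _ _ x _) (fun x => p_ge0 _ _ x _)
  (p_nd.2 nu mu mu' y).
Qed.

Lemma unblocked_extends (i j : 'I_2) (a b : bool) :
  let k := lift i ord0 in let l := lift j ord0 in
  pbar p i j a b ->
  ~ (exists a1 a2,
       [/\ p k j a1 b = 0, p i l a a2 = 0 & p k l (~~ a1) (~~ a2) = 0]) ->
  extends_consistently i j a b.
Proof.
move=> k l pij unblocked.
have [a0 pkj] := pbar_marginalB k pij.
have [b0 pil] := pbar_marginalA l pij.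
have [|||a1 [a2 /and3P[pkj' pil' pkl]]] :=
  @bool_rel_completion (pbar p k j ^~ b) (pbar p i l a) (pbar p k l) _ _
    pkj pil.
- by move=> a1 /(pbar_marginalA l).
- by move=> a2 /(pbar_marginalB k).
- move=> a1 a2; apply/negPn/negP.
  move=> /norP[/pbarN_eq0 pkj0 /norP[/pbarN_eq0 pil0 /pbarN_eq0 pkl0]].
  by apply: unblocked; exists a1, a2.
apply/existsP; exists (extend i a a1, extend j b a2).
rewrite /= !extend_at !eqxx; apply/'forall_forallP => m n.
by case: (ord2_liftP i m) => ->; case: (ord2_liftP j n) => ->;
  rewrite ?extend_at ?extend_lift.
Qed.

End Extensions.

Theorem corollary1 (R : realFieldType) (p : behavior R) :
  is_behavior p -> nondisturbing p ->
  (logically_contextual p <->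
   exists (i k j l : 'I_2) (a b al1 al2 : bool),
     i != k /\ j != l /\ 0 < p i j a b /\ p k j al1 b = 0 /\
     p i l a al2 = 0 /\ p k l (~~ al1) (~~ al2) = 0).
Proof.
move=> [p_ge0 _] p_nd; split=> [contextual | ].
  apply: NNPP => no_pattern; apply/contextual/logically_noncontextualP.
  move=> i j a b pij; apply: unblocked_extends => //.
  move=> -[a1 [a2 [pkj0 pil0 pkl0]]].
  by apply: no_pattern; exists i, (lift i ord0), j, (lift j ord0), a, b, a1, a2;
    rewrite !neq_lift.
move=> [i [k [j [l [a [b [al1 [al2 [_ [_ [pij [pkj0 [pil0 pkl0]]]]]]]]]]]]].
move=> /logically_noncontextualP/(_ i j a b pij).
exact/negP/(blocked_not_extends pkj0 pil0 pkl0).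
Qed.
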